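(* Let $\Gamma$ be a group that is nilpotent of class $\le n$, let $S\subseteq\Gamma\setminus\{\mathbb{I}\}$ be a generating set, $G:=\mathrm{Cay}(\Gamma,S)$, and let $r\ge\max\{2^{n+2},10\}$ be an integer. Let $h\in S$ be an involution such that $\{\mathbb{I},h\}$ is an $r$-local $2$-separator of $G$, and suppose that $G$ has no $r$-local cutvertex. Then every element of $S$ that traverses $\{\mathbb{I},h\}$ antisymmetrically also traverses $\{\mathbb{I},h\}$ symmetrically.
   Context: Generating sets are closed under inverses; $\mathrm{Cay}(\Gamma,S)$ is the simple graph on $\Gamma$ with edges $\{g,gs\}$. $a\equiv b$ means $a=b$ or $a=b^{-1}$; $\Gamma$ is nilpotent of class $\le n$ if $[g,h]_n=\mathbb{I}$ for all $g\not\equiv h$, where $[g,h]_1=gh^{-1}g^{-1}h$ and $[g,h]_n$ is the reduced form of $g[g,h]_{n-1}^{-1}g^{-1}[g,h]_{n-1}$. Ball $B_r(v)$: subgraph of all vertices and edges on closed walks of length $\le r$ through $v$; $v$ is an $r$-local cutvertex if $B_r(v)-v$ is disconnected. For $X=\{v_0,v_1\}$, $N(X)$ is the set of vertices outside $X$ adjacent to $X$; the connectivity graph $C_r(v_0,v_1)$ has vertex set $N(X)$, $a,b$ adjacent if for some $i$ they lie in the same component of $B_r(v_i)-v_0-v_1$; $X$ is an $r$-local $2$-separator if $C_r(v_0,v_1)$ is disconnected and $d_G(v_0,v_1)\le r/2$; the $r$-local components at $X$ are the components of $C_r(v_0,v_1)$. An element $g\in S$ traverses $X$ if for some $x\in X$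 the vertices $xg^{-1}$ and $xg$ lie in distinct $r$-local components at $X$. When $h$ is an involution and $g$ traverses $\{\mathbb{I},h\}$, $g$ traverses it symmetrically if $g^{-1}$ and $hg$ lie in distinct $r$-local components at $\{\mathbb{I},h\}$, and antisymmetrically if $g^{-1}$ and $hg^{-1}$ lie in distinct $r$-local components at $\{\mathbb{I},h\}$. *)

From Stdlib Require Import Arith List Relations.
Import ListNotations.

Definition group_axioms {T : Type} (mul : T -> T -> T) (inv : T -> T) (one : T) : Prop :=
  (forall x y z, mul x (mul y z) = mul (mul x y) z) /\
  (forall x, mul one x = x) /\ (forall x, mul x one = x) /\
  (forall x, mul (inv x) x = one) /\ (forall x, mul x (inv x) = one).

Section LocalSep.
Variables (T : Type) (mul : T -> T -> T) (inv : T -> T) (one : T) (Sg : T -> Prop).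

(* [g,h]_0 := h, so that [g,h]_1 = g h^-1 g^-1 h and
   [g,h]_k = g [g,h]_{k-1}^-1 g^-1 [g,h]_{k-1}. *)
Fixpoint iter_comm (k : nat) (g h : T) : T :=
  match k with
  | 0 => h
  | S k' => let c := iter_comm k' g h in mul (mul (mul g (inv c)) (inv g)) c
  end.

Definition nilpotent_le (n : nat) : Prop :=
  forall g h, g <> h -> g <> inv h -> iter_comm n g h = one.

Definition generates : Prop :=
  forall x, exists l : list T, Forall Sg l /\ x = fold_right mul one l.

Definition cay_adj (x y : T) : Prop := exists s, Sg s /\ y = mul x s.

Definition is_walk (m : nat) (f : nat -> T) : Prop :=
  forall i, i < m -> cay_adj (f i) (f (i + 1)).

Definition closed_walk_at (v : T) (m : nat) (f : nat -> T) : Prop :=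
  f 0 = v /\ f m = v /\ is_walk m f.

Definition ballV (r : nat) (v x : T) : Prop :=
  exists m f, m <= r /\ closed_walk_at v m f /\ exists i, i <= m /\ f i = x.

Definition ballE (r : nat) (v a b : T) : Prop :=
  exists m f, m <= r /\ closed_walk_at v m f /\
    exists i, i < m /\ ((f i = a /\ f (i + 1) = b) \/ (f i = b /\ f (i + 1) = a)).

Definition sub_connected (V : T -> Prop) (E : T -> T -> Prop) : T -> T -> Prop :=
  clos_refl_trans T (fun x y => V x /\ V y /\ E x y).

Definition local_cutvertex (r : nat) (v : T) : Prop :=
  let V := fun z => ballV r v z /\ z <> v in
  exists x y, V x /\ V y /\ ~ sub_connected V (ballE r v) x y.

Definition nbhd2 (v0 v1 x : T) : Prop :=
  x <> v0 /\ x <> v1 /\ (cay_adj v0 x \/ cay_adj v1 x).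

Definition same_comp_ball (r : nat) (v0 v1 vi a b : T) : Prop :=
  let V := fun z => ballV r vi z /\ z <> v0 /\ z <> v1 in
  V a /\ V b /\ sub_connected V (ballE r vi) a b.

Definition conn_adj (r : nat) (v0 v1 a b : T) : Prop :=
  nbhd2 v0 v1 a /\ nbhd2 v0 v1 b /\
  (same_comp_ball r v0 v1 v0 a b \/ same_comp_ball r v0 v1 v1 a b).

Definition distinct_local_comp (r : nat) (v0 v1 a b : T) : Prop :=
  nbhd2 v0 v1 a /\ nbhd2 v0 v1 b /\ ~ clos_refl_trans T (conn_adj r v0 v1) a b.

Definition dist_le (v0 v1 : T) (k : nat) : Prop :=
  exists f, f 0 = v0 /\ f k = v1 /\ is_walk k f.

(* {v0,v1} is an r-local 2-separator; d <= r/2 written as 2d <= r *)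
Definition local_2sep (r : nat) (v0 v1 : T) : Prop :=
  (exists a b, distinct_local_comp r v0 v1 a b) /\
  (exists k, dist_le v0 v1 k /\ 2 * k <= r).

Definition traverses (r : nat) (h g : T) : Prop :=
  exists x, (x = one \/ x = h) /\ distinct_local_comp r one h (mul x (inv g)) (mul x g).

Definition traverses_sym (r : nat) (h g : T) : Prop :=
  traverses r h g /\ distinct_local_comp r one h (inv g) (mul h g).

Definition traverses_antisym (r : nat) (h g : T) : Prop :=
  traverses r h g /\ distinct_local_comp r one h (inv g) (mul h (inv g)).

End LocalSep.

From Stdlib Require Import Arith Relations Lia Classical.

(* Suppose g traverses {1, h} antisymmetrically but not symmetrically.  Mark a
   vertex z of B_r(1) if z = 1 or z is joined, inside B_r(1) - {1, h}, to a
   neighbour of {1, h} lying in the r-local component of g^-1.  The hypotheses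
   say that left multiplication by h reverses the mark at g and at g^-1.  Since
   this multiplication swaps 1 and h, and the mark is constant along edges of
   B_r(1) - {1, h}, the reversal propagates along every walk over the letters
   g, g^-1, h short enough for it and its h-translate to stay in the ball.  By
   nilpotency some iterated commutator y = [h, g]_j with j < n is neither 1 nor
   h but commutes with h; y ends such a walk of length 3 2^j - 2, and y is
   adjacent to y h = h y, which must then carry the same mark as y. *)

Lemma clos_rt_map (A B : Type) (f : A -> B) (R : relation A) (R' : relation B) :
  (forall x y, R x y -> R' (f x) (f y)) ->
  forall x y, clos_refl_trans A R x y -> clos_refl_trans B R' (f x) (f y).
Proof.
  intros HR x y Hxy.
  induction Hxy as [x y Hxy | x | x y z _ IHxy _ IHyz].
  - apply rt_step, HR, Hxy.
  - apply rt_refl.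
  - apply rt_trans with (f y); assumption.
Qed.

Lemma sub_connected_ends (T : Type) (V : T -> Prop) (E : T -> T -> Prop) a b :
  sub_connected T V E a b -> a = b \/ (V a /\ V b).
Proof.
  intros Hab. induction Hab as [x y [Vx [Vy _]] | x | x y z _ [<- | IHxy] _ [<- | IHyz]].
  - right; auto.
  - left; reflexivity.
  - left; reflexivity.
  - right; exact IHyz.
  - right; exact IHxy.
  - right; split; [apply IHxy | apply IHyz].
Qed.

Lemma exists_first_change (P : nat -> Prop) n :
  ~ P 0 -> P n -> exists j, j < n /\ ~ P j /\ P (S j).
Proof.
  intros HP0 HPn. induction n as [|n IH]; [contradiction|].
  destruct (classic (P n)) as [HPn' | HPn'].
  - destruct (IH HPn') as [j [Hj HPj]]. exists j. split; [lia | exact HPj].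
  - exists n. auto.
Qed.

Section Group.
Variables (T : Type) (mul : T -> T -> T) (inv : T -> T) (one : T).
Hypothesis Hgrp : group_axioms mul inv one.

Lemma mul_assoc x y z : mul x (mul y z) = mul (mul x y) z.
Proof. apply Hgrp. Qed.
Lemma mul_1_l x : mul one x = x.
Proof. apply Hgrp. Qed.
Lemma mul_1_r x : mul x one = x.
Proof. apply Hgrp. Qed.
Lemma mul_inv_l x : mul (inv x) x = one.
Proof. apply Hgrp. Qed.
Lemma mul_inv_r x : mul x (inv x) = one.
Proof. apply Hgrp. Qed.

Lemma mul_inv_cancel_l x y : mul (inv x) (mul x y) = y.
Proof. now rewrite mul_assoc, mul_inv_l, mul_1_l. Qed.

Lemma mul_cancel_l a x y : mul a x = mul a y -> x = y.
Proof. intros E. now rewrite <- (mul_inv_cancel_l a x), E, mul_inv_cancel_l. Qed.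

Lemma mul_cancel_r a x y : mul x a = mul y a -> x = y.
Proof.
  intros E. rewrite <- (mul_1_r x), <- (mul_1_r y), <- (mul_inv_r a), !mul_assoc, E.
  reflexivity.
Qed.

Lemma inv_unique x y : mul x y = one -> x = inv y.
Proof. intros E. apply (mul_cancel_r y). now rewrite E, mul_inv_l. Qed.

Lemma inv_one : inv one = one.
Proof. symmetry. apply inv_unique, mul_1_l. Qed.

Lemma inv_involutive x : inv (inv x) = x.
Proof. symmetry. apply inv_unique, mul_inv_r. Qed.

Lemma inv_mul x y : inv (mul x y) = mul (inv y) (inv x).
Proof.
  symmetry. apply inv_unique.
  now rewrite <- mul_assoc, (mul_assoc (inv x)), mul_inv_l, mul_1_l, mul_inv_l.
Qed.

Section IteratedCommutator.
Variables h g : T.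

Notation c k := (iter_comm T mul inv k h g).

Lemma iter_comm_S_neq (Hh1 : h <> one) k : c (S k) <> h.
Proof.
  simpl. intros E. apply Hh1.
  assert (Ec : mul (inv (c k)) (mul (inv h) (c k)) = one).
  { apply (mul_cancel_l h). now rewrite mul_1_r, !mul_assoc. }
  assert (Eh : mul (inv h) (c k) = mul one (c k)).
  { apply (mul_cancel_l (inv (c k))). now rewrite Ec, mul_1_l, mul_inv_l. }
  apply mul_cancel_r in Eh.
  now rewrite <- (mul_1_r h), <- Eh, mul_inv_r.
Qed.

Lemma iter_comm_S_eq1 k : c (S k) = one -> mul h (c k) = mul (c k) h.
Proof.
  simpl. intros E. apply inv_unique in E.
  assert (Ec : mul h (mul (c k) (inv h)) = c k).
  { rewrite <- (inv_involutive (c k)) at 2. now rewrite <- E, !inv_mul, !inv_involutive. }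
  apply (mul_cancel_r (inv h)). now rewrite <- !mul_assoc, mul_inv_r, mul_1_r.
Qed.

Lemma exists_commuting_iter_comm n :
  h <> one -> g <> one -> g <> h -> c n = one ->
  exists j, j < n /\ c j <> one /\ c j <> h /\ mul h (c j) = mul (c j) h.
Proof.
  intros Hh1 Hg1 Hgh Hn.
  destruct (exists_first_change (fun k => c k = one) n Hg1 Hn) as [j [Hj [Hj1 HSj]]].
  exists j. repeat split; [exact Hj | exact Hj1 | | exact (iter_comm_S_eq1 j HSj)].
  destruct j as [|j]; [exact Hgh | apply iter_comm_S_neq, Hh1].
Qed.

End IteratedCommutator.

Inductive word (L : T -> Prop) : nat -> T -> Prop :=
  | word_nil : word L 0 one
  | word_snoc m x a : word L m x -> L a -> word L (S m) (mul x a).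

Section Words.
Variable L : T -> Prop.

Lemma word_letter a : L a -> word L 1 a.
Proof. intros Ha. rewrite <- (mul_1_l a). apply word_snoc; [apply word_nil | exact Ha]. Qed.

Lemma word_mul m k x y : word L m x -> word L k y -> word L (m + k) (mul x y).
Proof.
  intros Hx Hy. induction Hy as [| k y a _ IH Ha].
  - now rewrite Nat.add_0_r, mul_1_r.
  - rewrite Nat.add_succ_r, mul_assoc. apply word_snoc; assumption.
Qed.

Lemma word_cons m a x : L a -> word L m x -> word L (S m) (mul a x).
Proof. intros Ha Hx. apply (word_mul 1); [apply word_letter, Ha | exact Hx]. Qed.

Lemma word_inv (HL : forall a, L a -> L (inv a)) m x : word L m x -> word L m (inv x).
Proof.
  induction 1 as [| m x a _ IH Ha].
  - rewrite inv_one. apply word_nil.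
  - rewrite inv_mul. apply word_cons; [apply HL, Ha | exact IH].
Qed.

Lemma word_incl (L' : T -> Prop) m x : (forall a, L a -> L' a) -> word L m x -> word L' m x.
Proof. intros HL. induction 1; constructor; auto. Qed.

Lemma word_iter_comm (HL : forall a, L a -> L (inv a)) h g k :
  L h -> L g -> word L (3 * 2 ^ k - 2) (iter_comm T mul inv k h g).
Proof.
  intros Hh Hg. induction k as [| k IH]; [exact (word_letter g Hg) |].
  assert (Hpos : 2 ^ k <> 0) by (apply Nat.pow_nonzero; lia).
  replace (3 * 2 ^ S k - 2) with (S (3 * 2 ^ k - 2) + 1 + (3 * 2 ^ k - 2))
    by (rewrite Nat.pow_succ_r'; lia).
  apply word_mul; [apply word_mul | exact IH].
  - apply word_cons; [exact Hh | apply word_inv; assumption].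
  - apply word_letter, HL, Hh.
Qed.

End Words.

Section Cayley.
Variable Sg : T -> Prop.
Hypothesis HSinv : forall s, Sg s -> Sg (inv s).

Notation adj := (cay_adj T mul Sg).
Notation is_walk := (is_walk T mul Sg).

Lemma cay_adj_sym x y : adj x y -> adj y x.
Proof.
  intros [s [Hs ->]]. exists (inv s). split; [apply HSinv, Hs |].
  now rewrite <- mul_assoc, mul_inv_r, mul_1_r.
Qed.

Lemma cay_adj_mul t x y : adj x y -> adj (mul t x) (mul t y).
Proof. intros [s [Hs ->]]. exists s. split; [exact Hs | apply mul_assoc]. Qed.

Definition snoc (m : nat) (f : nat -> T) (y : T) (i : nat) : T :=
  if i <=? m then f i else y.

Lemma is_walk_snoc m f y : is_walk m f -> adj (f m) y -> is_walk (S m) (snoc m f y).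
Proof.
  intros Hf Hy i Hi. unfold snoc.
  destruct (Nat.leb_spec (i + 1) m).
  - rewrite (proj2 (Nat.leb_le i m)) by lia. apply Hf. lia.
  - assert (i = m) by lia. subst i.
    now rewrite Nat.leb_refl.
Qed.

Lemma word_walk m x : word Sg m x -> exists f, f 0 = one /\ f m = x /\ is_walk m f.
Proof.
  induction 1 as [| m x a _ [f [Hf0 [Hfm Hf]]] Ha].
  - exists (fun _ => one). split; [reflexivity | split; [reflexivity | intros i Hi; lia]].
  - exists (snoc m f (mul x a)). split; [| split].
    + exact Hf0.
    + unfold snoc. now rewrite (proj2 (Nat.leb_gt (S m) m)) by lia.
    + apply is_walk_snoc; [exact Hf |]. rewrite Hfm. exists a. auto.
Qed.

(* Ball membership is witnessed by closed walks; a walk followed by its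
   reverse is one. *)
Definition there_and_back (m : nat) (f : nat -> T) (i : nat) : T :=
  if i <=? m then f i else f (2 * m - i).

Lemma closed_walk_there_and_back m f :
  is_walk m f -> closed_walk_at T mul Sg (f 0) (2 * m) (there_and_back m f).
Proof.
  intros Hf. unfold there_and_back. split; [| split].
  - reflexivity.
  - destruct (Nat.leb_spec (2 * m) m) as [Hm | Hm].
    + now replace (2 * m) with 0 by lia.
    + now rewrite Nat.sub_diag.
  - intros i Hi. destruct (Nat.leb_spec (i + 1) m).
    + rewrite (proj2 (Nat.leb_le i m)) by lia. apply Hf. lia.
    + apply cay_adj_sym. destruct (Nat.leb_spec i m).
      * assert (i = m) by lia. subst i.
        replace (2 * m - (m + 1)) with (m - 1) by lia.
        replace (f m) with (f (m - 1 + 1)) by (f_equal; lia). apply Hf. lia.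
      * replace (2 * m - i) with (2 * m - (i + 1) + 1) by lia. apply Hf. lia.
Qed.

Variable r : nat.

Notation ballV := (ballV T mul Sg r).
Notation ballE := (ballE T mul Sg r).

Lemma walk_in_ball m f : is_walk m f -> 2 * m <= r ->
  (forall i, i <= m -> ballV (f 0) (f i)) /\
  (forall i, i < m -> ballE (f 0) (f i) (f (i + 1))).
Proof.
  intros Hf Hm. pose proof (closed_walk_there_and_back m f Hf) as Hc.
  split; intros i Hi; exists (2 * m), (there_and_back m f);
    (split; [exact Hm | split; [exact Hc | exists i; split; [lia |]]]);
    unfold there_and_back.
  - now rewrite (proj2 (Nat.leb_le i m)).
  - left. now rewrite (proj2 (Nat.leb_le i m)), (proj2 (Nat.leb_le (i + 1) m)) by lia.
Qed.

Lemma word_ballV m x : word Sg m x -> 2 * m <= r -> ballV one x.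
Proof.
  intros Hx Hm. destruct (word_walk m x Hx) as [f [Hf0 [Hfm Hf]]].
  rewrite <- Hf0, <- Hfm. apply (walk_in_ball m f Hf Hm). lia.
Qed.

Lemma word_ballE m x a : word Sg m x -> Sg a -> 2 * (m + 1) <= r -> ballE one x (mul x a).
Proof.
  intros Hx Ha Hm. destruct (word_walk m x Hx) as [f [Hf0 [Hfm Hf]]].
  assert (Hw : is_walk (S m) (snoc m f (mul x a))).
  { apply is_walk_snoc; [exact Hf |]. rewrite Hfm. exists a. auto. }
  destruct (walk_in_ball (S m) _ Hw ltac:(lia)) as [_ HE].
  specialize (HE m ltac:(lia)). unfold snoc in HE.
  rewrite (proj2 (Nat.leb_le 0 m)), Nat.leb_refl, (proj2 (Nat.leb_gt (m + 1) m)) in HE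
    by lia.
  now rewrite Hf0, Hfm in HE.
Qed.

Lemma ballE_sym v a b : ballE v a b -> ballE v b a.
Proof.
  intros [m [f [Hm [Hc [i [Hi Hab]]]]]]. exists m, f.
  split; [exact Hm | split; [exact Hc | exists i; split; [exact Hi | tauto]]].
Qed.

Lemma closed_walk_at_mul t v m f : closed_walk_at T mul Sg v m f ->
  closed_walk_at T mul Sg (mul t v) m (fun i => mul t (f i)).
Proof.
  intros [Hf0 [Hfm Hf]]. split; [now rewrite Hf0 | split; [now rewrite Hfm |]].
  intros i Hi. apply cay_adj_mul, Hf, Hi.
Qed.

Lemma ballV_mul t v z : ballV v z -> ballV (mul t v) (mul t z).
Proof.
  intros [m [f [Hm [Hc [i [Hi Hfi]]]]]]. exists m, (fun i => mul t (f i)).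
  split; [exact Hm | split; [apply closed_walk_at_mul, Hc | exists i; now rewrite Hfi]].
Qed.

Lemma ballE_mul t v a b : ballE v a b -> ballE (mul t v) (mul t a) (mul t b).
Proof.
  intros [m [f [Hm [Hc [i [Hi Hab]]]]]]. exists m, (fun i => mul t (f i)).
  split; [exact Hm | split; [apply closed_walk_at_mul, Hc | exists i; split; [exact Hi |]]].
  destruct Hab as [[-> ->] | [-> ->]]; auto.
Qed.

Lemma nbhd2_mul t v0 v1 x :
  nbhd2 T mul Sg v0 v1 x -> nbhd2 T mul Sg (mul t v0) (mul t v1) (mul t x).
Proof.
  intros [Hx0 [Hx1 Hadj]].
  split; [| split]; [intros E; apply mul_cancel_l in E; contradiction .. |].
  destruct Hadj; [left | right]; apply cay_adj_mul; assumption.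
Qed.

Lemma nbhd2_sym v0 v1 x : nbhd2 T mul Sg v0 v1 x -> nbhd2 T mul Sg v1 v0 x.
Proof. unfold nbhd2. tauto. Qed.

Lemma same_comp_ball_mul t v0 v1 vi a b :
  same_comp_ball T mul Sg r v0 v1 vi a b ->
  same_comp_ball T mul Sg r (mul t v0) (mul t v1) (mul t vi) (mul t a) (mul t b).
Proof.
  unfold same_comp_ball. cbv zeta.
  set (V := fun z => ballV vi z /\ z <> v0 /\ z <> v1).
  set (V' := fun z => ballV (mul t vi) z /\ z <> mul t v0 /\ z <> mul t v1).
  assert (HV : forall z, V z -> V' (mul t z)).
  { intros z [Hz [Hz0 Hz1]].
    split; [apply ballV_mul, Hz | split; intros E; apply mul_cancel_l in E; contradiction]. }
  intros [Va [Vb Hab]]. split; [exact (HV a Va) | split; [exact (HV b Vb) |]].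
  apply (clos_rt_map _ _ (mul t)) with (2 := Hab).
  intros x y [Vx [Vy Exy]]. split; [exact (HV x Vx) | split; [exact (HV y Vy) |]].
  apply ballE_mul, Exy.
Qed.

Lemma same_comp_ball_sym v0 v1 vi a b :
  same_comp_ball T mul Sg r v0 v1 vi a b -> same_comp_ball T mul Sg r v1 v0 vi a b.
Proof.
  unfold same_comp_ball. cbv zeta. intros [Va [Vb Hab]].
  split; [tauto | split; [tauto |]].
  apply (clos_rt_map _ _ (fun x => x)) with (2 := Hab). tauto.
Qed.

Lemma conn_adj_mul t v0 v1 a b :
  conn_adj T mul Sg r v0 v1 a b ->
  conn_adj T mul Sg r (mul t v0) (mul t v1) (mul t a) (mul t b).
Proof.
  intros [Ha [Hb Hab]].
  split; [apply nbhd2_mul, Ha | split; [apply nbhd2_mul, Hb |]].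
  destruct Hab; [left | right]; apply same_comp_ball_mul; assumption.
Qed.

Lemma conn_adj_sym v0 v1 a b :
  conn_adj T mul Sg r v0 v1 a b -> conn_adj T mul Sg r v1 v0 a b.
Proof.
  intros [Ha [Hb Hab]].
  split; [apply nbhd2_sym, Ha | split; [apply nbhd2_sym, Hb |]].
  destruct Hab; [right | left]; apply same_comp_ball_sym; assumption.
Qed.

Section Involution.
Variable h : T.
Hypothesis Hinvol : mul h h = one.

Lemma inv_invol : inv h = h.
Proof. symmetry. apply inv_unique, Hinvol. Qed.

Lemma mul_invol_K x : mul h (mul h x) = x.
Proof. now rewrite mul_assoc, Hinvol, mul_1_l. Qed.

Lemma mul_invol_neq1 x : x <> h -> mul h x <> one.
Proof. intros Hx E. apply Hx. now rewrite <- (mul_invol_K x), E, mul_1_r. Qed.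

Lemma mul_invol_neq x : x <> one -> mul h x <> h.
Proof. intros Hx E. apply Hx, (mul_cancel_l h). now rewrite mul_1_r. Qed.

(* Left multiplication by [h] swaps [one] and [h], so it preserves the local
   structure at [{one, h}]. *)
Lemma nbhd2_mul_invol x : nbhd2 T mul Sg one h x -> nbhd2 T mul Sg one h (mul h x).
Proof.
  intros Hx. apply nbhd2_sym. pose proof (nbhd2_mul h _ _ _ Hx) as Hhx.
  now rewrite mul_1_r, Hinvol in Hhx.
Qed.

Definition local_comp : T -> T -> Prop := clos_refl_trans T (conn_adj T mul Sg r one h).

Lemma local_comp_mul_invol a b : local_comp a b -> local_comp (mul h a) (mul h b).
Proof.
  apply clos_rt_map. intros x y Hxy. apply conn_adj_sym.
  pose proof (conn_adj_mul h _ _ _ _ Hxy) as Hhxy.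
  now rewrite mul_1_r, Hinvol in Hhxy.
Qed.

Section Sides.
Variable g : T.
Hypotheses (Hh : Sg h) (Hh1 : h <> one) (Hg : Sg g).
Hypotheses (Hnb_gi : nbhd2 T mul Sg one h (inv g)) (Hnb_g : nbhd2 T mul Sg one h g).
Hypotheses (Hcomp_gi : ~ local_comp (inv g) (mul h (inv g)))
  (Hcomp_g : ~ local_comp (inv g) g) (Hcomp_hg : local_comp (inv g) (mul h g)).

Definition inner (z : T) : Prop := ballV one z /\ z <> one /\ z <> h.

Definition attached (z : T) : Prop :=
  exists u, nbhd2 T mul Sg one h u /\ local_comp (inv g) u /\
    sub_connected T inner (ballE one) u z.

Definition side (z : T) : Prop := z = one \/ attached z.

Definition swaps (x : T) : Prop := side x <-> ~ side (mul h x).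

Lemma attached_neq z : attached z -> z <> one /\ z <> h.
Proof.
  intros [u [[Hu1 [Huh _]] [_ Huz]]].
  destruct (sub_connected_ends _ _ _ _ _ Huz) as [<- | [_ [_ Hz]]]; tauto.
Qed.

Lemma attached_edge x y : inner x -> inner y -> ballE one x y -> attached x -> attached y.
Proof.
  intros Hx Hy Hxy [u [Hu [Hgu Hux]]]. exists u.
  split; [exact Hu | split; [exact Hgu |]].
  apply rt_trans with x; [exact Hux |]. apply rt_step. auto.
Qed.

Lemma side_edge x y : inner x -> inner y -> ballE one x y -> (side x <-> side y).
Proof.
  intros Hx Hy Hxy. unfold side.
  pose proof (attached_edge x y Hx Hy Hxy).
  pose proof (attached_edge y x Hy Hx (ballE_sym _ _ _ Hxy)).
  destruct Hx as [_ [Hx1 _]], Hy as [_ [Hy1 _]]. tauto.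
Qed.

Lemma side_nbhd u : nbhd2 T mul Sg one h u -> ballV one u -> (side u <-> local_comp (inv g) u).
Proof.
  intros Hu Hbu. pose proof Hu as [Hu1 [Huh _]]. split.
  - intros [-> | [u' [Hu' [Hgu' Hu'u]]]]; [contradiction |].
    destruct (sub_connected_ends _ _ _ _ _ Hu'u) as [<- | [Hi' Hi]]; [exact Hgu' |].
    apply rt_trans with u'; [exact Hgu' |]. apply rt_step.
    split; [exact Hu' | split; [exact Hu | left]]. split; [| split]; assumption.
  - intros Hgu. right. exists u. split; [exact Hu | split; [exact Hgu | apply rt_refl]].
Qed.

Lemma swaps_one : swaps one.
Proof.
  unfold swaps, side. rewrite mul_1_r.
  pose proof (attached_neq h). split; [intros _ | intros _; left; reflexivity].
  intros [E | Hh']; [exact (Hh1 E) | tauto].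
Qed.

Lemma swaps_mul_invol x : swaps x -> swaps (mul h x).
Proof.
  unfold swaps. rewrite mul_invol_K. destruct (classic (side x)); tauto.
Qed.

Lemma swaps_g : ballV one g -> ballV one (mul h g) -> swaps g.
Proof.
  intros Hbg Hbhg. unfold swaps.
  rewrite (side_nbhd g Hnb_g Hbg), (side_nbhd (mul h g) (nbhd2_mul_invol g Hnb_g) Hbhg).
  tauto.
Qed.

Lemma swaps_inv_g : ballV one (inv g) -> ballV one (mul h (inv g)) -> swaps (inv g).
Proof.
  intros Hbg Hbhg. unfold swaps.
  rewrite (side_nbhd (inv g) Hnb_gi Hbg).
  rewrite (side_nbhd (mul h (inv g)) (nbhd2_mul_invol (inv g) Hnb_gi) Hbhg).
  pose proof (rt_refl T (conn_adj T mul Sg r one h) (inv g)). unfold local_comp in *. tauto.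
Qed.

Definition letter (a : T) : Prop := a = g \/ a = inv g \/ a = h.

Lemma letter_inv a : letter a -> letter (inv a).
Proof.
  intros [-> | [-> | ->]]; [right; left | left | right; right];
    auto using inv_involutive, inv_invol.
Qed.

Lemma letter_gen a : letter a -> Sg a.
Proof. intros [-> | [-> | ->]]; auto. Qed.

Lemma swaps_step x a : letter a ->
  ballV one x -> ballV one (mul x a) -> ballV one (mul h x) -> ballV one (mul h (mul x a)) ->
  ballE one x (mul x a) -> ballE one (mul h x) (mul h (mul x a)) ->
  swaps x -> swaps (mul x a).
Proof.
  intros Ha Hb1 Hb2 Hb3 Hb4 He1 He2 Hx.
  destruct (classic (mul x a = one)) as [-> | Hxa1]; [exact swaps_one |].
  destruct (classic (mul x a = h)) as [Hxah | Hxah].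
  { rewrite Hxah, <- (mul_1_r h). apply swaps_mul_invol, swaps_one. }
  destruct (classic (x = one)) as [-> | Hx1].
  { rewrite mul_1_l in *.
    destruct Ha as [-> | [-> | ->]]; [apply swaps_g | apply swaps_inv_g | ]; tauto. }
  destruct (classic (x = h)) as [-> | Hxh].
  { rewrite mul_invol_K in Hb4.
    destruct Ha as [-> | [-> | ->]]; [| | rewrite Hinvol in Hxa1; tauto];
      apply swaps_mul_invol; [apply swaps_g | apply swaps_inv_g]; assumption. }
  assert (Hside : side x <-> side (mul x a)) by (apply side_edge; repeat split; auto).
  assert (Hhside : side (mul h x) <-> side (mul h (mul x a))).
  { apply side_edge; repeat split; auto using mul_invol_neq1, mul_invol_neq. }
  unfold swaps in *. tauto.
Qed.

Lemma swaps_word m x : word letter m x -> 2 * (m + 1) <= r -> swaps x.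
Proof.
  induction 1 as [| m x a Hx IH Ha]; intros Hm; [exact swaps_one |].
  assert (Hx' := word_incl letter Sg m x letter_gen Hx).
  assert (Hxa := word_snoc Sg m x a Hx' (letter_gen a Ha)).
  apply swaps_step; [exact Ha | | | | | | | apply IH; lia].
  - apply (word_ballV m); [exact Hx' | lia].
  - apply (word_ballV (S m)); [exact Hxa | lia].
  - apply (word_ballV (S m)); [apply word_cons; assumption | lia].
  - apply (word_ballV (S (S m))); [apply word_cons; assumption | lia].
  - apply (word_ballE m); [exact Hx' | apply letter_gen, Ha | lia].
  - rewrite mul_assoc. apply (word_ballE (S m)); [apply word_cons; assumption | | lia].
    apply letter_gen, Ha.
Qed.

(* [y] is adjacent to [h y = y h], so [h] cannot reverse its side. *)
Lemma no_central_word m y : word letter m y -> 2 * (m + 1) <= r ->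
  y <> one -> y <> h -> mul h y = mul y h -> False.
Proof.
  intros Hy Hm Hy1 Hyh Hcomm.
  assert (Hy' := word_incl letter Sg m y letter_gen Hy).
  assert (Hinner_y : inner y) by (split; [apply (word_ballV m); [exact Hy' | lia] | tauto]).
  assert (Hinner_yh : inner (mul y h)).
  { rewrite <- Hcomm. split; [| split; [apply mul_invol_neq1 | apply mul_invol_neq]; assumption].
    rewrite Hcomm. apply (word_ballV (S m)); [apply word_snoc; assumption | lia]. }
  assert (Hside := side_edge y (mul y h) Hinner_y Hinner_yh (word_ballE m y h Hy' Hh Hm)).
  pose proof (swaps_word m y Hy Hm) as Hswap. unfold swaps in Hswap.
  rewrite Hcomm in Hswap. tauto.
Qed.

End Sides.

Lemma traverses_sym_of_antisym (HS1 : ~ Sg one) (Hh : Sg h)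
  n (Hnil : nilpotent_le T mul inv one n) (Hr : 2 ^ (n + 2) <= r) g (Hg : Sg g) :
  traverses_antisym T mul inv one Sg r h g -> traverses_sym T mul inv one Sg r h g.
Proof.
  intros [Htrav [Hnb_gi [_ Hcomp_gi]]].
  assert (Hg1 : g <> one) by (intros ->; contradiction).
  assert (Hh1 : h <> one) by (intros ->; contradiction).
  assert (Hgh : g <> h).
  { intros ->. destruct Hnb_gi as [_ [Hneq _]]. apply Hneq, inv_invol. }
  assert (Hnb_g : nbhd2 T mul Sg one h g).
  { split; [exact Hg1 | split; [exact Hgh |]].
    left. exists g. split; [exact Hg | symmetry; apply mul_1_l]. }
  split; [exact Htrav | split; [exact Hnb_gi |]].
  split; [apply nbhd2_mul_invol, Hnb_g | intros Hcomp_hg].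
  assert (Hcomp_g : ~ local_comp (inv g) g).
  { destruct Htrav as [x [[-> | ->] [_ [_ Hsplit]]]].
    - now rewrite !mul_1_l in Hsplit.
    - intros Hc. apply Hsplit, local_comp_mul_invol, Hc. }
  assert (Hcn : iter_comm T mul inv n h g = one).
  { apply Hnil; intros E; [apply Hgh | apply (proj1 (proj2 Hnb_gi))]; now rewrite E. }
  destruct (exists_commuting_iter_comm h g n Hh1 Hg1 Hgh Hcn) as [j [Hj [Hc1 [Hch Hcomm]]]].
  apply (no_central_word g Hh Hh1 Hg Hnb_gi Hnb_g Hcomp_gi Hcomp_g Hcomp_hg
    (3 * 2 ^ j - 2) (iter_comm T mul inv j h g)); try assumption.
  - apply word_iter_comm; [apply letter_inv | right; right | left]; reflexivity.
  - assert (Hpos : 2 ^ j <> 0) by (apply Nat.pow_nonzero; lia).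
    assert (Hjn : 2 ^ S j <= 2 ^ n) by (apply Nat.pow_le_mono_r; lia).
    rewrite Nat.pow_succ_r' in Hjn. rewrite Nat.pow_add_r in Hr. change (2 ^ 2) with 4 in Hr.
    lia.
Qed.

End Involution.
End Cayley.
End Group.

Theorem proposition8p6
  (T : Type) (mul : T -> T -> T) (inv : T -> T) (one : T)
  (Hgrp : group_axioms mul inv one)
  (n : nat) (Hn : 1 <= n) (Hnil : nilpotent_le T mul inv one n)
  (Sg : T -> Prop)
  (HSinv : forall s, Sg s -> Sg (inv s))
  (HS1 : ~ Sg one)
  (Hgen : generates T mul one Sg)
  (r : nat) (Hr1 : 2 ^ (n + 2) <= r) (Hr2 : 10 <= r)
  (h : T) (Hh : Sg h) (Hinvol : mul h h = one)
  (Hsep : local_2sep T mul Sg r one h)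
  (Hnocut : forall v, ~ local_cutvertex T mul Sg r v) :
  forall g, Sg g ->
    traverses_antisym T mul inv one Sg r h g ->
    traverses_sym T mul inv one Sg r h g.
Proof.
  intros g Hg.
  exact (traverses_sym_of_antisym T mul inv one Hgrp Sg HSinv r h Hinvol HS1 Hh n Hnil Hr1 g Hg).
Qed.
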